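(* A causal graph dynamics $F:\mathcal{G}_{\Sigma,\Delta,\pi}\to\mathcal{G}_{\Sigma,\Delta,\pi}$ is monotonic for the subgraph order (i.e. $G\subseteq H$ implies $F(G)\subseteq F(H)$) if and only if $F$ admits a local rule (of some radius $r$) which is monotonic from the subdisk order on $\mathcal{D}^r_{\Sigma,\Delta,\pi}$ to the subgraph order on $\mathcal{G}_{\Sigma,\Delta,\pi}$.
   Context: Fix an uncountably infinite set $\mathcal{V}$ of vertex names, sets $\Sigma,\Delta$ and a finite set $\pi$ of ports. A graph $G$ consists of a countable set $V(G)\subset\mathcal{V}$; a set $E(G)$ of pairwise disjoint two-element subsets of $V(G)\times\pi$ (write $u\!:\!i$ for $(u,i)$); partial functions $\sigma(G):V(G)\rightharpoonup\Sigma$, $\delta(G):E(G)\rightharpoonup\Delta$. $\mathcal{G}_{\Sigma,\Delta,\pi}$ is the set of such graphs. Subgraph order: $G\subseteq H$ iff $V(G)\subseteq V(H)$, $E(G)\subseteq E(H)$, $\sigma(G)\subseteq\sigma(H)$, $\delta(G)\subseteq\delta(H)$ (partial functions as sets of pairs); on pointed graphs $(G,v)\subseteq(H,u)$ iff $G\subseteq H$ and $v=u$ (the subdisk order on disks). Graphs $G,H$ are consistent if $E(G)\cup E(H)$ consists of pairwise disjoint two-element sets and the $\sigma$'s, resp. $\delta$'s, agree where both defined; then $G\cup H$ is the componentwise union; intersections are componentwise; $\varnothing$ is the empty graph. $d_G$ is shortest-path distance (consecutive path vertices joined by an edge via some ports), $B_G(c,r)=\{u\mid d_G(c,u)\le r\}$.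 The disk $G^r_c=(H,c)$ has $V(H)=B_G(c,r+1)$, $E(H)$ the edges of $G$ with at least one endpoint in $B_G(c,r)$, $\sigma(H)=\sigma(G)|_{B_G(c,r)}$, $\delta(H)=\delta(G)|_{E(H)}$; $\mathcal{D}^r_{\Sigma,\Delta,\pi}$ is the set of all such disks of radius $r$. A renaming is a bijection $R$ of $\mathcal{V}$ acting on edges, graphs ($V(R(G))=R(V(G))$, $E(R(G))=R(E(G))$, $\sigma(R(G))=\sigma(G)\circ R^{-1}$, $\delta(R(G))=\delta(G)\circ R^{-1}$) and pointed graphs. A local rule of radius $r$ is $f:\mathcal{D}^r_{\Sigma,\Delta,\pi}\to\mathcal{G}_{\Sigma,\Delta,\pi}$ with (1) for each renaming $R$ some renaming $R'$ with $f\circ R=R'\circ f$; (2) $\bigcap_k H_k=\varnothing\Rightarrow\bigcap_k f((H_k,v_k))=\varnothing$ for any family of radius-$r$ disks; (3) a uniform bound on $|V(f(D))|$; (4) $f(G^r_u),f(G^r_v)$ consistent for all $G$, $u,v\in V(G)$. A CGD is $F$ with $F(G)=\bigcup_{v\in V(G)}f(G^r_v)$ for some local rule $f$ of some radius $r$; such $f$ is called a local rule of $F$. *)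

From Stdlib Require Import List Arith.

Set Implicit Arguments.

Section CGD.

Variables (VN Sigma Delta Pi : Type).

Definition port := (VN * Pi)%type.

(* A (pre)graph.  Edges are two-element sets {p,q} of ports, encoded as a
   symmetric relation gE p q ("{p,q} is an edge").  Partial functions are
   encoded as sets of pairs (functional relations). *)
Record graph := mkGraph {
  gV : VN -> Prop;
  gE : port -> port -> Prop;
  gsig : VN -> Sigma -> Prop;
  gdel : port -> port -> Delta -> Prop
}.

Definition countable_set (P : VN -> Prop) : Prop :=
  exists g : VN -> nat, forall u v, P u -> P v -> g u = g v -> u = v.

Definition wf (G : graph) : Prop :=
  countable_set (gV G) /\
  (forall p q, gE G p q -> gV G (fst p) /\ gV G (fst q)) /\
  (forall p q, gE G p q -> p <> q) /\
  (forall p q, gE G p q -> gE G q p) /\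
  (* edges pairwise disjoint *)
  (forall p q q', gE G p q -> gE G p q' -> q = q') /\
  (forall v s, gsig G v s -> gV G v) /\
  (forall v s s', gsig G v s -> gsig G v s' -> s = s') /\
  (forall p q d, gdel G p q d -> gE G p q) /\
  (forall p q d, gdel G p q d -> gdel G q p d) /\
  (forall p q d d', gdel G p q d -> gdel G p q d' -> d = d').

Definition subg (G H : graph) : Prop :=
  (forall u, gV G u -> gV H u) /\
  (forall p q, gE G p q -> gE H p q) /\
  (forall v s, gsig G v s -> gsig H v s) /\
  (forall p q d, gdel G p q d -> gdel H p q d).

Definition pgraph := (graph * VN)%type.

Definition subpg (D1 D2 : pgraph) : Prop :=
  subg (fst D1) (fst D2) /\ snd D1 = snd D2.

Definition consistent (G H : graph) : Prop :=
  (forall p q q', (gE G p q \/ gE H p q) -> (gE G p q' \/ gE H p q') -> q = q') /\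
  (forall v s s', gsig G v s -> gsig H v s' -> s = s') /\
  (forall p q d d', gdel G p q d -> gdel H p q d' -> d = d').

Definition empty_graph : graph :=
  mkGraph (fun _ => False) (fun _ _ => False) (fun _ _ => False) (fun _ _ _ => False).

Definition bigcap (I : Type) (Gs : I -> graph) : graph :=
  mkGraph (fun u => forall i, gV (Gs i) u)
          (fun p q => forall i, gE (Gs i) p q)
          (fun v s => forall i, gsig (Gs i) v s)
          (fun p q d => forall i, gdel (Gs i) p q d).

Definition bigcup (I : Type) (P : I -> Prop) (Gs : I -> graph) : graph :=
  mkGraph (fun u => exists i, P i /\ gV (Gs i) u)
          (fun p q => exists i, P i /\ gE (Gs i) p q)
          (fun v s => exists i, P i /\ gsig (Gs i) v s)
          (fun p q d => exists i, P i /\ gdel (Gs i) p q d).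

Definition adj (G : graph) (u v : VN) : Prop :=
  exists i j, gE G (u, i) (v, j).

Fixpoint ball (G : graph) (c : VN) (n : nat) (u : VN) : Prop :=
  match n with
  | O => gV G c /\ u = c
  | S m => ball G c m u \/ exists w, ball G c m w /\ adj G w u
  end.

Definition disk_graph (G : graph) (r : nat) (c : VN) : graph :=
  mkGraph (fun u => ball G c (S r) u)
          (fun p q => gE G p q /\ (ball G c r (fst p) \/ ball G c r (fst q)))
          (fun v s => gsig G v s /\ ball G c r v)
          (fun p q d => gdel G p q d /\ (ball G c r (fst p) \/ ball G c r (fst q))).

Definition disk (G : graph) (r : nat) (c : VN) : pgraph := (disk_graph G r c, c).

Definition is_disk (r : nat) (D : pgraph) : Prop :=
  exists G c, wf G /\ gV G c /\ D = disk G r c.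

Record renaming := mkRenaming {
  rn : VN -> VN;
  rn_inv : VN -> VN;
  rn_K : forall x, rn (rn_inv x) = x;
  rn_Ki : forall x, rn_inv (rn x) = x
}.

Definition rn_port (R : renaming) (p : port) : port := (rn_inv R (fst p), snd p).

Definition rename (R : renaming) (G : graph) : graph :=
  mkGraph (fun u => gV G (rn_inv R u))
          (fun p q => gE G (rn_port R p) (rn_port R q))
          (fun v s => gsig G (rn_inv R v) s)
          (fun p q d => gdel G (rn_port R p) (rn_port R q) d).

Definition rename_pg (R : renaming) (D : pgraph) : pgraph :=
  (rename R (fst D), rn R (snd D)).

Definition card_le (P : VN -> Prop) (n : nat) : Prop :=
  exists l : list VN, length l <= n /\ forall u, P u -> In u l.

Definition local_rule (r : nat) (f : pgraph -> graph) : Prop :=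
  (forall D, is_disk r D -> wf (f D)) /\
  (forall R : renaming, exists R' : renaming,
      forall D, is_disk r D -> f (rename_pg R D) = rename R' (f D)) /\
  (forall (I : Type) (Ds : I -> pgraph),
      (forall k, is_disk r (Ds k)) ->
      bigcap (fun k => fst (Ds k)) = empty_graph ->
      bigcap (fun k => f (Ds k)) = empty_graph) /\
  (exists n, forall D, is_disk r D -> card_le (gV (f D)) n) /\
  (forall G u v, wf G -> gV G u -> gV G v ->
      consistent (f (disk G r u)) (f (disk G r v))).

Definition local_rule_of (F : graph -> graph) (r : nat) (f : pgraph -> graph) : Prop :=
  local_rule r f /\
  forall G, wf G -> F G = bigcup (gV G) (fun v => f (disk G r v)).

Definition is_CGD (F : graph -> graph) : Prop :=
  exists r f, local_rule_of F r f.

Definition monotonic_F (F : graph -> graph) : Prop :=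
  forall G H, wf G -> wf H -> subg G H -> subg (F G) (F H).

Definition monotonic_rule (r : nat) (f : pgraph -> graph) : Prop :=
  forall D1 D2, is_disk r D1 -> is_disk r D2 -> subpg D1 D2 -> subg (f D1) (f D2).

End CGD.

Arguments empty_graph {VN Sigma Delta Pi}.

(* If f is a local rule of a monotonic F, so is
     f'(D) = \bigcup { f(D') | D' a radius-r disk, D' \subseteq D },
   which is monotonic by construction.  The key point is that a disk D is its own disk at its
   centre, so f(D') \subseteq F(D') \subseteq F(G) whenever D' \subseteq G; hence
   f(G^r_v) \subseteq f'(G^r_v) \subseteq F(G).  This yields F(G) = \bigcup_v f'(G^r_v),
   consistency, and the bound |V(f'(D))| <= |V(D)| n, finite because with finitely many ports
   a disk has at most (1+|\pi|)^(r+1) vertices.  For the intersection condition, a point in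
   every f'(D_k) comes with a witness subdisk D'_k \subseteq D_k for each k, and the D'_k
   again have empty intersection.  Conversely, a monotonic rule makes F monotonic since
   G \subseteq H implies G^r_v \subseteq H^r_v. *)

From Stdlib Require Import List Arith Lia.
From Stdlib Require Import ClassicalEpsilon FunctionalExtensionality PropExtensionality.

Set Implicit Arguments.

Section Graphs.
Variables (VN Sigma Delta Pi : Type).
Local Notation graph := (graph VN Sigma Delta Pi).
Local Notation pgraph := (pgraph VN Sigma Delta Pi).
Local Notation port := (port VN Pi).

(* A graph seen as the set of its vertices, edges and labels: the subgraph order, unions and
   intersections are then pointwise on items. *)
Inductive item :=
| ItemV (u : VN)
| ItemE (p q : port)
| ItemS (v : VN) (s : Sigma)
| ItemD (p q : port) (d : Delta).

Definition mem (G : graph) (x : item) : Prop :=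
  match x with
  | ItemV u => gV G u
  | ItemE p q => gE G p q
  | ItemS v s => gsig G v s
  | ItemD p q d => gdel G p q d
  end.

Lemma graph_ext (G H : graph) :
  (forall u, gV G u <-> gV H u) ->
  (forall p q, gE G p q <-> gE H p q) ->
  (forall v s, gsig G v s <-> gsig H v s) ->
  (forall p q d, gdel G p q d <-> gdel H p q d) -> G = H.
Proof.
  destruct G, H; simpl; intros.
  f_equal; repeat (apply functional_extensionality; intro);
    apply propositional_extensionality; auto.
Qed.

Lemma graph_eqP (G H : graph) : (forall x, mem G x <-> mem H x) -> G = H.
Proof.
  intro h; apply graph_ext; intros.
  - exact (h (ItemV _)).
  - exact (h (ItemE _ _)).
  - exact (h (ItemS _ _)).
  - exact (h (ItemD _ _ _)).
Qed.

Lemma subgP (G H : graph) : subg G H <-> forall x, mem G x -> mem H x.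
Proof.
  split.
  - intros (hV & hE & hS & hD) []; simpl; auto.
  - intro h; repeat split.
    + intro u; exact (h (ItemV u)).
    + intros p q; exact (h (ItemE p q)).
    + intros v s; exact (h (ItemS v s)).
    + intros p q d; exact (h (ItemD p q d)).
Qed.

Lemma subg_refl (G : graph) : subg G G.
Proof. apply subgP; auto. Qed.

Lemma subg_trans (G H K : graph) : subg G H -> subg H K -> subg G K.
Proof. rewrite !subgP; auto. Qed.

Lemma subg_antisym (G H : graph) : subg G H -> subg H G -> G = H.
Proof. rewrite !subgP; intros; apply graph_eqP; split; auto. Qed.

Lemma subpg_refl (D : pgraph) : subpg D D.
Proof. split; [apply subg_refl | reflexivity]. Qed.

Lemma subpg_trans (D1 D2 D3 : pgraph) : subpg D1 D2 -> subpg D2 D3 -> subpg D1 D3.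
Proof. intros [h1 e1] [h2 e2]; split; [eapply subg_trans; eauto | congruence]. Qed.

Lemma mem_bigcup (I : Type) (P : I -> Prop) (Gs : I -> graph) x :
  mem (bigcup P Gs) x <-> exists i, P i /\ mem (Gs i) x.
Proof. destruct x; reflexivity. Qed.

Lemma mem_bigcap (I : Type) (Gs : I -> graph) x :
  mem (bigcap Gs) x <-> forall i, mem (Gs i) x.
Proof. destruct x; reflexivity. Qed.

Lemma eq_empty_graphP (G : graph) : G = empty_graph <-> forall x, ~ mem G x.
Proof.
  split; [intros -> []; simpl; auto |].
  intro h; apply graph_eqP; intro x; split;
    [intro hx; destruct (h x hx) | destruct x; simpl; tauto].
Qed.

Lemma empty_subg (G : graph) : subg empty_graph G.
Proof. apply subgP; intros [] []. Qed.

Lemma bigcap_mono (I : Type) (Gs Hs : I -> graph) :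
  (forall i, subg (Gs i) (Hs i)) -> subg (bigcap Gs) (bigcap Hs).
Proof.
  intro h; apply subgP; intro x; rewrite !mem_bigcap; intros hx i.
  exact (proj1 (subgP _ _) (h i) x (hx i)).
Qed.

Lemma sub_bigcup (I : Type) (P : I -> Prop) (Gs : I -> graph) i :
  P i -> subg (Gs i) (bigcup P Gs).
Proof. intro hi; apply subgP; intros x hx; apply mem_bigcup; eauto. Qed.

Lemma bigcup_lub (I : Type) (P : I -> Prop) (Gs : I -> graph) H :
  (forall i, P i -> subg (Gs i) H) -> subg (bigcup P Gs) H.
Proof.
  intro h; apply subgP; intros x hx; apply mem_bigcup in hx as (i & hi & hx).
  exact (proj1 (subgP _ _) (h i hi) x hx).
Qed.

Definition functional (G : graph) : Prop :=
  (forall p q q', gE G p q -> gE G p q' -> q = q') /\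
  (forall v s s', gsig G v s -> gsig G v s' -> s = s') /\
  (forall p q d d', gdel G p q d -> gdel G p q d' -> d = d').

Lemma consistent_sub (G H W : graph) :
  functional W -> subg G W -> subg H W -> consistent G H.
Proof.
  intros (fE & fS & fD) (_ & GE & GS & GD) (_ & HE & HS & HD).
  split; [| split].
  - intros p q q' [h | h] [h' | h']; eauto.
  - eauto.
  - eauto.
Qed.

Lemma functional_sub (G W : graph) : functional W -> subg G W -> functional G.
Proof.
  intros (fE & fS & fD) (_ & hE & hS & hD); split; [| split]; eauto.
Qed.

Lemma wf_functional (G : graph) : wf G -> functional G.
Proof. intros (_ & _ & _ & _ & fE & _ & fS & _ & _ & fD); split; auto. Qed.

Lemma wf_bigcup (I : Type) (P : I -> Prop) (Gs : I -> graph) :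
  (forall i, P i -> wf (Gs i)) ->
  countable_set (gV (bigcup P Gs)) -> functional (bigcup P Gs) -> wf (bigcup P Gs).
Proof.
  intros W hcount (fE & fS & fD).
  refine (conj hcount (conj _ (conj _ (conj _ (conj fE (conj _ (conj fS (conj _ (conj _ fD)))))))));
    simpl; intros * (i & hi & h);
    destruct (W i hi) as (_ & WEV & Wirr & Wsym & _ & WsV & _ & WdE & Wdsym & _).
  - split; exists i; split; auto; apply (WEV _ _ h).
  - exact (Wirr _ _ h).
  - eauto.
  - eauto.
  - eauto.
  - eauto.
Qed.

Lemma ball_mono (G H : graph) c k u : subg G H -> ball G c k u -> ball H c k u.
Proof.
  intros S; revert u; induction k as [| k IH]; simpl; intros u hb.
  - destruct S as (hV & _); destruct hb; auto.
  - destruct hb as [hb | (w & hw & i & j & he)]; [left; auto |].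
    right; exists w; split; auto; exists i, j; apply S, he.
Qed.

Lemma ball_le (G : graph) c k k' u : k <= k' -> ball G c k u -> ball G c k' u.
Proof. induction 1; simpl; auto. Qed.

Lemma ball_center (G : graph) c k : gV G c -> ball G c k c.
Proof. intro hc; exact (ball_le G c c (Nat.le_0_l k) (conj hc eq_refl)). Qed.

Lemma ball_V (G : graph) c k u : wf G -> ball G c k u -> gV G u.
Proof.
  intros (_ & WEV & _); revert u; induction k as [| k IH]; simpl; intros u hb.
  - destruct hb as [hc ->]; exact hc.
  - destruct hb as [hb | (w & _ & i & j & he)]; [auto | exact (proj2 (WEV _ _ he))].
Qed.

Lemma disk_sub (G : graph) r c : wf G -> subg (disk_graph G r c) G.
Proof.
  intro W; split; [intros u hu; eapply ball_V; [exact W | exact hu] |].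
  split; [| split]; simpl; tauto.
Qed.

Lemma disk_mono (G H : graph) r c : subg G H -> subg (disk_graph G r c) (disk_graph H r c).
Proof.
  intros S; pose proof S as (_ & hE & hS & hD); split; [| split; [| split]];
    cbn [disk_graph gV gE gsig gdel].
  - eauto using ball_mono.
  - intros p q [he [h | h]]; eauto using ball_mono.
  - intros v s [hs h]; eauto using ball_mono.
  - intros p q d [hd [h | h]]; eauto using ball_mono.
Qed.

Lemma disk_center (G : graph) r c : gV G c -> gV (disk_graph G r c) c.
Proof. exact (ball_center G c (S r)). Qed.

Lemma disk_wf (G : graph) r c : wf G -> wf (disk_graph G r c).
Proof.
  intro W; pose proof (functional_sub (wf_functional W) (disk_sub r c W)) as (fE & fS & fD).
  pose proof W as ((g & hg) & WEV & Wirr & Wsym & _ & _ & _ & WdE & Wdsym & _).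
  refine (conj _ (conj _ (conj _ (conj _ (conj fE (conj _ (conj fS (conj _ (conj _ fD))))))))).
  - exists g; intros u v hu hv; apply hg;
      [exact (ball_V c (S r) u W hu) | exact (ball_V c (S r) v W hv)].
  - intros [x i] [y j] [he [hb | hb]]; simpl in *; split.
    + left; exact hb.
    + right; exists x; split; [exact hb | exists i, j; exact he].
    + right; exists y; split; [exact hb | exists j, i; apply Wsym, he].
    + left; exact hb.
  - intros p q [he _]; exact (Wirr p q he).
  - intros p q [he hb]; split; [apply Wsym, he | tauto].
  - intros v s [_ hb]; left; exact hb.
  - intros p q d [hd hb]; split; [eapply WdE; exact hd | exact hb].
  - intros p q d [hd hb]; split; [apply Wdsym, hd | tauto].
Qed.

Lemma ball_disk (G : graph) r c k u : gV G c -> k <= S r ->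
  ball (disk_graph G r c) c k u <-> ball G c k u.
Proof.
  intro hc; revert u; induction k as [| k IH]; intros u hk; simpl.
  - split; intros [_ ->]; split; auto; apply disk_center, hc.
  - rewrite IH by lia; split; intros [hb | (w & hw & i & j & he)]; auto; right; exists w.
    + rewrite IH in hw by lia; split; [exact hw | exists i, j; exact (proj1 he)].
    + rewrite IH by lia; split; [exact hw | exists i, j; split; [exact he |]].
      left; exact (ball_le G c w (le_S_n _ _ hk) hw).
Qed.

Lemma disk_idem (G : graph) r c : gV G c -> disk_graph (disk_graph G r c) r c = disk_graph G r c.
Proof.
  intro hc; apply graph_ext; cbn [disk_graph gV gE gsig gdel]; intros;
    rewrite ?ball_disk by (auto; lia); tauto.
Qed.

Lemma is_disk_intro r (G : graph) c : wf G -> gV G c -> is_disk r (disk G r c).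
Proof. intros; exists G, c; auto. Qed.

Lemma is_disk_wf r (D : pgraph) : is_disk r D -> wf (fst D).
Proof. intros (G & c & W & _ & ->); apply disk_wf, W. Qed.

Lemma is_disk_center r (D : pgraph) : is_disk r D -> gV (fst D) (snd D).
Proof. intros (G & c & _ & hc & ->); apply disk_center, hc. Qed.

Lemma is_disk_idem r (D : pgraph) : is_disk r D -> disk (fst D) r (snd D) = D.
Proof. intros (G & c & _ & hc & ->); unfold disk; simpl; rewrite disk_idem; auto. Qed.

Definition port_map (h : VN -> VN) (p : port) : port := (h (fst p), snd p).

Definition item_map (h : VN -> VN) (x : item) : item :=
  match x with
  | ItemV u => ItemV (h u)
  | ItemE p q => ItemE (port_map h p) (port_map h q)
  | ItemS v s => ItemS (h v) s
  | ItemD p q d => ItemD (port_map h p) (port_map h q) d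
  end.

Lemma item_map_cancel (h k : VN -> VN) :
  (forall v, h (k v) = v) -> forall x, item_map h (item_map k x) = x.
Proof.
  intros hk [u | [a i] [b j] | v s | [a i] [b j] d]; unfold item_map, port_map; simpl;
    rewrite ?hk; reflexivity.
Qed.

Lemma port_map_inj (h : VN -> VN) p q :
  (forall u v, h u = h v -> u = v) -> port_map h p = port_map h q -> p = q.
Proof.
  intros hinj; destruct p as [a i], q as [b j]; unfold port_map; simpl.
  intro e; injection e as e ->; rewrite (hinj a b e); reflexivity.
Qed.

Lemma rn_inv_inj (R : renaming VN) u v : rn_inv R u = rn_inv R v -> u = v.
Proof. intro e; rewrite <- (rn_K R u), e, rn_K; reflexivity. Qed.

Lemma mem_rename (R : renaming VN) (G : graph) x :
  mem (rename R G) x <-> mem G (item_map (rn_inv R) x).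
Proof. destruct x; reflexivity. Qed.

Definition rinv (R : renaming VN) : renaming VN :=
  mkRenaming (rn_inv R) (rn R) (rn_Ki R) (rn_K R).

Lemma rename_pg_cancel (R R' : renaming VN) (D : pgraph) :
  (forall v, rn R (rn R' v) = v) -> rename_pg R (rename_pg R' D) = D.
Proof.
  destruct D as [G c]; intro h; unfold rename_pg; simpl; f_equal; [| apply h].
  apply graph_eqP; intro x; rewrite !mem_rename, item_map_cancel; [reflexivity |].
  intro v; rewrite <- (h (rn_inv R' (rn_inv R v))), !rn_K; reflexivity.
Qed.

Lemma subg_rename (R : renaming VN) (G H : graph) : subg G H -> subg (rename R G) (rename R H).
Proof. rewrite !subgP; intros h x; rewrite !mem_rename; apply h. Qed.

Lemma subpg_rename (R : renaming VN) (D1 D2 : pgraph) :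
  subpg D1 D2 -> subpg (rename_pg R D1) (rename_pg R D2).
Proof. intros [h e]; split; simpl; [apply subg_rename, h | congruence]. Qed.

Lemma ball_rename (R : renaming VN) (G : graph) c k u :
  ball (rename R G) c k u <-> ball G (rn_inv R c) k (rn_inv R u).
Proof.
  revert u; induction k as [| k IH]; intro u; simpl.
  - split; intros [h e]; split; auto.
    + congruence.
    + apply (rn_inv_inj R); auto.
  - rewrite IH; split; intros [h | (w & hw & i & j & he)]; auto; right.
    + exists (rn_inv R w); split; [apply IH, hw | exists i, j; exact he].
    + exists (rn R w); rewrite IH, rn_Ki; split; [exact hw | exists i, j].
      unfold rename, rn_port; simpl; rewrite rn_Ki; exact he.
Qed.

Lemma rename_disk (R : renaming VN) (G : graph) r c :
  rename_pg R (disk G r c) = disk (rename R G) r (rn R c).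
Proof.
  unfold rename_pg, disk; simpl; f_equal.
  apply graph_ext; cbn [rename disk_graph gV gE gsig gdel rn_port fst snd]; intros;
    rewrite ?ball_rename, ?rn_Ki; tauto.
Qed.

Lemma rename_wf (R : renaming VN) (G : graph) : wf G -> wf (rename R G).
Proof.
  intros ((g & hg) & WEV & Wirr & Wsym & WEfun & WsV & Wsfun & WdE & Wdsym & Wdfun).
  pose proof (fun p q => @port_map_inj (rn_inv R) p q (rn_inv_inj R)) as hinj.
  refine (conj _ (conj _ (conj _ (conj _ (conj _ (conj _ (conj _ (conj _ (conj _ _))))))))); simpl.
  - exists (fun u => g (rn_inv R u)); intros u v hu hv e; apply (rn_inv_inj R), hg; auto.
  - intros p q h; exact (WEV _ _ h).
  - intros p q h ->; exact (Wirr _ _ h eq_refl).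
  - intros p q h; exact (Wsym _ _ h).
  - intros p q q' h h'; exact (hinj _ _ (WEfun _ _ _ h h')).
  - intros v s h; exact (WsV _ _ h).
  - intros v s s' h h'; exact (Wsfun _ _ _ h h').
  - intros p q d h; exact (WdE _ _ _ h).
  - intros p q d h; exact (Wdsym _ _ _ h).
  - intros p q d d' h h'; exact (Wdfun _ _ _ _ h h').
Qed.

Lemma is_disk_rename r (R : renaming VN) (D : pgraph) : is_disk r D -> is_disk r (rename_pg R D).
Proof.
  intros (G & c & W & hc & ->); rewrite rename_disk; apply is_disk_intro.
  - apply rename_wf, W.
  - simpl; rewrite rn_Ki; exact hc.
Qed.

Lemma card_le_weaken (P Q : VN -> Prop) n m :
  card_le Q n -> (forall u, P u -> Q u) -> n <= m -> card_le P m.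
Proof. intros (l & hl & hQ) hPQ hnm; exists l; split; [lia | auto]. Qed.

Lemma card_le_list_union (A : Type) (l : list A) (Q : A -> VN -> Prop) n :
  (forall a, In a l -> card_le (Q a) n) ->
  card_le (fun u => exists a, In a l /\ Q a u) (length l * n).
Proof.
  induction l as [| a l IH]; intro hQ.
  - exists nil; split; [simpl; lia | intros u (a & [] & _)].
  - destruct (hQ a (or_introl eq_refl)) as (La & hLa & qa).
    destruct IH as (L & hL & q); [intros b hb; apply hQ; right; exact hb |].
    exists (La ++ L); split; [rewrite length_app; simpl; lia |].
    intros u (b & [<- | hb] & hu); apply in_or_app; [left; auto | right; eauto].
Qed.

Lemma card_le_bigcup (P : VN -> Prop) (Q : VN -> VN -> Prop) m n :
  card_le P m -> (forall v, P v -> card_le (Q v) n) ->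
  card_le (fun u => exists v, P v /\ Q v u) (m * n).
Proof.
  intros (L & hL & hP) hQ.
  apply card_le_weaken with (Q := fun u => exists v, In v L /\ (P v /\ Q v u)) (n := length L * n).
  - apply card_le_list_union; intros v _.
    destruct (excluded_middle_informative (P v)) as [hv | hv].
    + eapply card_le_weaken; [exact (hQ v hv) | tauto | lia].
    + exists nil; split; [simpl; lia | tauto].
  - intros u (v & hv & hu); exists v; auto.
  - apply Nat.mul_le_mono_r, hL.
Qed.

Fixpoint list_index (l : list VN) (u : VN) : nat :=
  match l with
  | nil => 0
  | x :: l' => if excluded_middle_informative (x = u) then 0 else S (list_index l' u)
  end.

Lemma list_index_inj l u v : In u l -> In v l -> list_index l u = list_index l v -> u = v.
Proof.
  induction l as [| x l IH]; simpl; [tauto |].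
  destruct (excluded_middle_informative (x = u)) as [xu | xu],
    (excluded_middle_informative (x = v)) as [xv | xv];
    intros [hu | hu] [hv | hv] e; try congruence; apply IH; congruence.
Qed.

Lemma card_le_countable (P : VN -> Prop) n : card_le P n -> countable_set P.
Proof.
  intros (l & _ & hl); exists (list_index l); intros u v hu hv; apply list_index_inj; auto.
Qed.

Lemma neighbourhood_card (G : graph) (lp : list Pi) w : wf G -> (forall i, In i lp) ->
  card_le (fun u => u = w \/ adj G w u) (S (length lp)).
Proof.
  intros W hlp; destruct (wf_functional W) as (fE & _).
  destruct (@card_le_list_union _ lp (fun i u => exists j, gE G (w, i) (u, j)) 1)
    as (L & hL & hin).
  - (* Each port of w carries at most one edge, since edges are pairwise disjoint. *)
    intros i _.
    destruct (excluded_middle_informative (exists u j, gE G (w, i) (u, j)))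
      as [(u & j & h) | hn].
    + exists (u :: nil); split; [simpl; lia |].
      intros u' (j' & h'); injection (fE _ _ _ h' h) as -> _; simpl; auto.
    + exists nil; split; [simpl; lia |]; intros u' (j' & h'); exfalso; eauto.
  - exists (w :: L); split; [simpl; lia |].
    intros u [-> | (i & j & h)]; [left; reflexivity | right; apply hin; exists i; eauto].
Qed.

Lemma ball_card (G : graph) (lp : list Pi) c k : wf G -> (forall i, In i lp) ->
  card_le (ball G c k) (S (length lp) ^ k).
Proof.
  intros W hlp; induction k as [| k IH].
  - exists (c :: nil); split; [simpl; lia |]; intros u [_ ->]; simpl; auto.
  - rewrite Nat.pow_succ_r', Nat.mul_comm.
    eapply card_le_weaken; [| | apply le_n].
    + apply card_le_bigcup with (Q := fun w u => u = w \/ adj G w u); [exact IH |].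
      intros w _; exact (neighbourhood_card lp w W hlp).
    + intros u [hu | (w & hw & ha)]; [exists u | exists w]; auto.
Qed.

Section SubdiskUnion.
Variables (F : graph -> graph) (r : nat) (f : pgraph -> graph).

Definition subdisk_union (D : pgraph) : graph :=
  bigcup (fun D' => is_disk r D' /\ subpg D' D) f.

Lemma subdisk_union_monotonic : monotonic_rule r subdisk_union.
Proof.
  intros D1 D2 _ _ h12; apply bigcup_lub; intros D' [hD' h'].
  apply sub_bigcup; split; [exact hD' | eapply subpg_trans; eauto].
Qed.

Hypothesis Hf : local_rule_of F r f.

Lemma subdisk_union_rename (R : renaming VN) : exists R' : renaming VN,
  forall D, is_disk r D -> subdisk_union (rename_pg R D) = rename R' (subdisk_union D).
Proof.
  destruct Hf as [(_ & Hren & _) _]; destruct (Hren R) as [R' hR]; exists R'; intros D hD.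
  apply graph_eqP; intro x; unfold subdisk_union; rewrite mem_rename, !mem_bigcup; split.
  - intros (D' & [hD' hsub] & hx).
    exists (rename_pg (rinv R) D'); split; [split |].
    + apply is_disk_rename, hD'.
    + rewrite <- (rename_pg_cancel (rinv R) R D) by apply rn_Ki; apply subpg_rename, hsub.
    + rewrite <- mem_rename, <- hR by (apply is_disk_rename, hD').
      rewrite rename_pg_cancel by apply rn_K; exact hx.
  - intros (D' & [hD' hsub] & hx).
    exists (rename_pg R D'); split; [split |].
    + apply is_disk_rename, hD'.
    + apply subpg_rename, hsub.
    + rewrite hR by exact hD'; apply mem_rename, hx.
Qed.

Lemma subdisk_union_cap (I : Type) (Ds : I -> pgraph) :
  (forall k, is_disk r (Ds k)) ->
  bigcap (fun k => fst (Ds k)) = empty_graph ->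
  bigcap (fun k => subdisk_union (Ds k)) = empty_graph.
Proof.
  intros hDs hempty; destruct Hf as [(_ & _ & Hcap & _) _].
  apply eq_empty_graphP; intros x hx; rewrite mem_bigcap in hx.
  assert (hsub : forall k, exists D', (is_disk r D' /\ subpg D' (Ds k)) /\ mem (f D') x)
    by (intro k; apply mem_bigcup, hx).
  apply choice in hsub as [Ds' hDs'].
  assert (hempty' : bigcap (fun k => fst (Ds' k)) = empty_graph).
  { apply subg_antisym; [| apply empty_subg].
    rewrite <- hempty; apply bigcap_mono; intro k; apply hDs'. }
  apply (proj1 (eq_empty_graphP _) (Hcap I Ds' (fun k => proj1 (proj1 (hDs' k))) hempty') x).
  apply mem_bigcap; intro k; apply hDs'.
Qed.

Lemma F_functional G : wf G -> functional (F G).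
Proof.
  intro W; destruct Hf as [(_ & _ & _ & _ & Hcons) HF]; rewrite (HF G W).
  split; [| split]; simpl.
  - intros p q q' (u & hu & h) (v & hv & h').
    destruct (Hcons G u v W hu hv) as (cE & _); exact (cE p q q' (or_introl h) (or_intror h')).
  - intros w s s' (u & hu & h) (v & hv & h').
    destruct (Hcons G u v W hu hv) as (_ & cS & _); exact (cS w s s' h h').
  - intros p q d d' (u & hu & h) (v & hv & h').
    destruct (Hcons G u v W hu hv) as (_ & _ & cD); exact (cD p q d d' h h').
Qed.

Hypothesis HM : monotonic_F F.

Lemma rule_sub_F D G : is_disk r D -> wf G -> subg (fst D) G -> subg (f D) (F G).
Proof.
  intros hD W hsub; destruct Hf as [_ HF]; pose proof (is_disk_wf hD) as WD.
  apply subg_trans with (F (fst D)); [| exact (HM WD W hsub)].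
  rewrite (HF _ WD), <- (is_disk_idem hD) at 1.
  exact (sub_bigcup (gV (fst D)) (fun v => f (disk (fst D) r v)) (snd D) (is_disk_center hD)).
Qed.

Lemma subdisk_union_sub_F D G : wf G -> subg (fst D) G -> subg (subdisk_union D) (F G).
Proof.
  intros W hsub; apply bigcup_lub; intros D' [hD' [hsub' _]].
  apply rule_sub_F; [exact hD' | exact W | eapply subg_trans; eauto].
Qed.

Lemma subdisk_union_F G : wf G -> F G = bigcup (gV G) (fun v => subdisk_union (disk G r v)).
Proof.
  intro W; destruct Hf as [_ HF]; apply subg_antisym.
  - rewrite (HF G W); apply bigcup_lub; intros v hv.
    apply subg_trans with (subdisk_union (disk G r v));
      [| exact (sub_bigcup (gV G) (fun v => subdisk_union (disk G r v)) v hv)].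
    apply sub_bigcup; split; [apply is_disk_intro; assumption | apply subpg_refl].
  - apply bigcup_lub; intros v hv; apply subdisk_union_sub_F; [exact W | apply disk_sub, W].
Qed.

Lemma subdisk_union_consistent G u v : wf G -> gV G u -> gV G v ->
  consistent (subdisk_union (disk G r u)) (subdisk_union (disk G r v)).
Proof.
  intros W _ _; apply consistent_sub with (F G); [exact (F_functional W) | ..];
    apply subdisk_union_sub_F; [exact W | apply disk_sub, W | exact W | apply disk_sub, W].
Qed.

Section FinitePorts.
Variable lp : list Pi.
Hypothesis Hlp : forall i, In i lp.

Lemma subdisk_union_bound :
  exists N, forall D, is_disk r D -> card_le (gV (subdisk_union D)) N.
Proof.
  destruct Hf as [(Hwf & _ & _ & (n & hn) & _) HF].
  exists (S (length lp) ^ S r * n); intros D hD; pose proof (is_disk_wf hD) as WD.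
  eapply card_le_weaken; [| | apply le_n].
  - apply card_le_bigcup with (P := gV (fst D)) (Q := fun v => gV (f (disk (fst D) r v))).
    + destruct hD as (K & c & WK & _ & ->); exact (ball_card lp c (S r) WK Hlp).
    + intros v hv; apply hn, is_disk_intro; assumption.
  - assert (hsub : subg (subdisk_union D) (F (fst D)))
      by (apply subdisk_union_sub_F; [exact WD | apply subg_refl]).
    intros u hu; pose proof (proj1 hsub u hu) as h; rewrite (HF _ WD) in h; exact h.
Qed.

Lemma subdisk_union_wf D : is_disk r D -> wf (subdisk_union D).
Proof.
  intro hD; pose proof (is_disk_wf hD) as WD; destruct Hf as [(Hwf & _) _].
  apply wf_bigcup.
  - intros D' [hD' _]; exact (Hwf D' hD').
  - destruct subdisk_union_bound as [N hN]; exact (card_le_countable (hN D hD)).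
  - apply functional_sub with (F (fst D)); [exact (F_functional WD) |].
    apply subdisk_union_sub_F; [exact WD | apply subg_refl].
Qed.

Lemma subdisk_union_local_rule_of : local_rule_of F r subdisk_union.
Proof.
  split; [| exact subdisk_union_F].
  split; [exact subdisk_union_wf |].
  split; [exact subdisk_union_rename |].
  split; [exact subdisk_union_cap |].
  split; [exact subdisk_union_bound | exact subdisk_union_consistent].
Qed.

End FinitePorts.
End SubdiskUnion.

Lemma monotonic_rule_monotonic_F (F : graph -> graph) r (f : pgraph -> graph) :
  local_rule_of F r f -> monotonic_rule r f -> monotonic_F F.
Proof.
  intros [_ HF] Hmono G H WG WH hsub; rewrite (HF G WG), (HF H WH).
  apply bigcup_lub; intros v hv.
  apply subg_trans with (f (disk H r v));
    [| exact (sub_bigcup (gV H) (fun v => f (disk H r v)) v (proj1 hsub v hv))].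
  apply Hmono.
  - apply is_disk_intro; assumption.
  - apply is_disk_intro; [assumption | exact (proj1 hsub v hv)].
  - split; [apply disk_mono, hsub | reflexivity].
Qed.

End Graphs.

Theorem proposition2p9 (VN Sigma Delta Pi : Type)
  (HVN : ~ exists g : VN -> nat, forall u v, g u = g v -> u = v)
  (HPi : exists l : list Pi, forall i, In i l)
  (F : graph VN Sigma Delta Pi -> graph VN Sigma Delta Pi)
  (HF : is_CGD F) :
  monotonic_F F <->
  exists (r : nat) (f : pgraph VN Sigma Delta Pi -> graph VN Sigma Delta Pi),
    local_rule_of F r f /\ monotonic_rule r f.
Proof.
  split.
  - intro HM; destruct HF as (r & f & Hf), HPi as [lp Hlp].
    exists r, (subdisk_union r f); split.
    + exact (subdisk_union_local_rule_of Hf HM lp Hlp).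
    + apply subdisk_union_monotonic.
  - intros (r & f & Hf & Hmono); exact (monotonic_rule_monotonic_F Hf Hmono).
Qed.
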